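(* Consider problem (III) with $n$ datum shapes $D_i\in\mathbb{R}^{d\times m}$ ($d\in\{2,3\}$), visibility matrices $\Gamma_i$, fixed diagonal $\Lambda$ and fixed $\nu\ge0$, where each warp is either the affine transformation (feature map $\beta(p)=[p^{\top},1]^{\top}$, $\mu_i=0$) or a TPS warp (with $\mu_i\ge0$), and the matrices $\mathcal{B}_i(D_i)\Gamma_i\Gamma_i\mathcal{B}_i(D_i)^{\top}+\mu_iZ_i^{\top}Z_i$ are invertible. If each datum shape is replaced by $D_i'=R_iD_i+t_i\mathbf{1}^{\top}$ for arbitrary (possibly distinct) rotations $R_i$ and translations $t_i$, where for a TPS warp its control centers are transformed by the same $(R_i,t_i)$, then the optimal reference shape $S$ of problem (III) remains the same.
   Context: Problem (III): $$\min_{W_i,\,S\in\mathbb{R}^{d\times m}}\ \sum_{i=1}^n\|W_i^{\top}\mathcal{B}_i(D_i)\Gamma_i-S\Gamma_i\|_F^2+\sum_{i=1}^n\mu_i\|Z_iW_i\|_F^2+\nu\|S\mathbf{1}\|_2^2\quad\text{s.t.}\quad SS^{\top}=\Lambda,$$ where $\Gamma_i$ is diagonal with entries in $\{0,1\}$, $\mathcal{B}_i(D)=[\beta_i(p_1),\dots,\beta_i(p_m)]$ for $D=[p_1,\dots,p_m]$ and $\mathbf{1}\in\mathbb{R}^m$ is the all-ones vector. TPS warp: control centers $c_1,\dots,c_l\in\mathbb{R}^d$, parameter $\lambda$, kernel $\phi(r)=r^2\log(r^2)$ ($d=2$) or $-|r|$ ($d=3$); $K_\lambda$ has diagonal $\lambda$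 and off-diagonal entries $\phi(\|c_j-c_k\|)$; $\tilde{C}=[\tilde{c}_1,\dots,\tilde{c}_l]$, $\tilde{c}_j=[c_j^{\top},1]^{\top}$; $K_\lambda$, $\tilde{C}K_\lambda^{-1}\tilde{C}^{\top}$ invertible; $\bar{\mathcal{E}}_\lambda=K_\lambda^{-1}-K_\lambda^{-1}\tilde{C}^{\top}(\tilde{C}K_\lambda^{-1}\tilde{C}^{\top})^{-1}\tilde{C}K_\lambda^{-1}$ (positive semidefinite in the paper's setting); $\mathcal{E}_\lambda=\begin{bmatrix}\bar{\mathcal{E}}_\lambda\\ (\tilde{C}K_\lambda^{-1}\tilde{C}^{\top})^{-1}\tilde{C}K_\lambda^{-1}\end{bmatrix}$; $\beta(p)=\mathcal{E}_\lambda^{\top}\begin{bmatrix}\phi_p\\ \tilde{p}\end{bmatrix}$, $\phi_p=[\phi(\|p-c_j\|)]_j$, $\tilde{p}=[p^{\top},1]^{\top}$; $Z=\sqrt{\bar{\mathcal{E}}_\lambda}$. *)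

From HB Require Import structures.
From mathcomp Require Import all_boot all_order all_algebra.
From mathcomp Require Import reals exp.
Set Implicit Arguments. Unset Strict Implicit. Unset Printing Implicit Defensive.
Import Order.TTheory GRing.Theory Num.Theory.
Local Open Scope ring_scope.

Section Defs.
Variable R : realType.
Variable d : nat.

Definition vnorm (v : 'cV[R]_d) : R := Num.sqrt (\sum_(k < d) v k 0 ^+ 2).

Definition frob2 (p q : nat) (A : 'M[R]_(p, q)) : R :=
  \sum_(i < p) \sum_(j < q) A i j ^+ 2.

(* TPS kernel: r^2 log(r^2) for d = 2, -|r| for d = 3.
   (ln 0 = 0 in MathComp-Analysis, matching the usual convention phi(0)=0.) *)
Definition tps_phi (r : R) : R :=
  if d == 2%N then r ^+ 2 * ln (r ^+ 2) else - `|r|.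

(* A warp: either affine or a TPS warp with l control centers C (columns)
   and regularization parameter lambda. *)
Variant warp := Affine | TPS (l : nat) of 'M[R]_(d, l) & R.

Definition fdim (w : warp) : nat :=
  match w with Affine => (d + 1)%N | TPS l _ _ => l end.

Section TPSdefs.
Variables (l : nat) (C : 'M[R]_(d, l)) (lam : R).
Definition tps_K : 'M[R]_l :=
  \matrix_(j, k) if j == k then lam else tps_phi (vnorm (col j C - col k C)).
Definition tps_Ct : 'M[R]_(d + 1, l) := col_mx C (const_mx 1).
Definition tps_G : 'M[R]_(d + 1) := tps_Ct *m invmx tps_K *m tps_Ct^T.
Definition tps_Ebar : 'M[R]_l :=
  invmx tps_K - invmx tps_K *m tps_Ct^T *m invmx tps_G *m tps_Ct *m invmx tps_K.
Definition tps_E : 'M[R]_(l + (d + 1), l) :=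
  col_mx tps_Ebar (invmx tps_G *m tps_Ct *m invmx tps_K).
Definition tps_phivec (p : 'cV[R]_d) : 'cV[R]_l :=
  \col_j tps_phi (vnorm (p - col j C)).
Definition tps_beta (p : 'cV[R]_d) : 'cV[R]_l :=
  tps_E^T *m col_mx (tps_phivec p) (col_mx p (1 : 'cV[R]_1)).
End TPSdefs.

Definition beta (w : warp) (p : 'cV[R]_d) : 'cV[R]_(fdim w) :=
  match w return 'cV[R]_(fdim w) with
  | Affine => col_mx p (1 : 'cV[R]_1)
  | TPS l C lam => tps_beta C lam p
  end.

Definition Bmat (w : warp) (m : nat) (D : 'M[R]_(d, m)) : 'M[R]_(fdim w, m) :=
  \matrix_(k, j) beta w (col j D) k 0.

(* \bar E_lambda; the affine warp has no bending energy (taken as 0). *)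
Definition Ebar (w : warp) : 'M[R]_(fdim w) :=
  match w return 'M[R]_(fdim w) with
  | Affine => 0
  | TPS l C lam => tps_Ebar C lam
  end.

Definition warp_ok (w : warp) : Prop :=
  match w with
  | Affine => True
  | TPS l C lam => tps_K C lam \in unitmx /\ tps_G C lam \in unitmx
  end.

Definition psd_sqrt (k : nat) (Z E : 'M[R]_k) : Prop :=
  Z^T = Z /\ (forall x : 'cV[R]_k, 0 <= (x^T *m Z *m x) 0 0) /\ Z *m Z = E.

Definition warp_move (Rot : 'M[R]_d) (t : 'cV[R]_d) (w : warp) : warp :=
  match w with
  | Affine => Affine
  | TPS l C lam => TPS (Rot *m C + t *m const_mx 1) lam
  end.

Definition is_rotation (Rot : 'M[R]_d) : Prop :=
  Rot^T *m Rot = 1%:M /\ \det Rot = 1.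

Definition cost3 (n m : nat) (w : 'I_n -> warp) (D : 'I_n -> 'M[R]_(d, m))
  (Gam : 'I_n -> 'M[R]_m) (mu : 'I_n -> R) (Z : forall i, 'M[R]_(fdim (w i)))
  (nu : R) (W : forall i, 'M[R]_(fdim (w i), d)) (S : 'M[R]_(d, m)) : R :=
  \sum_(i < n) frob2 ((W i)^T *m Bmat (w i) (D i) *m Gam i - S *m Gam i)
  + \sum_(i < n) mu i * frob2 (Z i *m W i)
  + nu * frob2 (S *m const_mx 1 : 'cV[R]_d).

Definition optimal_S (n m : nat) (w : 'I_n -> warp) (D : 'I_n -> 'M[R]_(d, m))
  (Gam : 'I_n -> 'M[R]_m) (mu : 'I_n -> R) (Z : forall i, 'M[R]_(fdim (w i)))
  (Lam : 'M[R]_d) (nu : R) (S : 'M[R]_(d, m)) : Prop :=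
  S *m S^T = Lam /\
  exists W : forall i, 'M[R]_(fdim (w i), d),
    forall (W' : forall i, 'M[R]_(fdim (w i), d)) (S' : 'M[R]_(d, m)),
      S' *m S'^T = Lam ->
      cost3 D Gam mu Z nu W S <= cost3 D Gam mu Z nu W' S'.

End Defs.

From Stdlib Require Import FunctionalExtensionality.
From HB Require Import structures.
From mathcomp Require Import all_boot all_order all_algebra.
From mathcomp Require Import reals exp.
Set Implicit Arguments. Unset Strict Implicit. Unset Printing Implicit Defensive.
Import Order.TTheory GRing.Theory Num.Theory.
Local Open Scope ring_scope.

(* Write M = [[Rot, t], [0, 1]] for the homogeneous matrix of the rigid motion
   p |-> Rot p + t.  Affine features satisfy beta(Rot p + t) = M beta(p).  For a
   TPS warp whose centres move along, K_lambda only sees distances, so it is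
   unchanged, while C~ becomes M C~; hence Ebar_lambda is unchanged and the
   factor M^-T picked up by the lower block of E_lambda cancels the M in front
   of p~, so beta itself is invariant.  Thus the substitution W_i |-> M_i^T W_i
   (affine) or W_i |-> W_i (TPS) is a bijection carrying the cost of the moved
   problem onto the original one for every S, and the two problems have the
   same optimal S. *)

Lemma invmxM (R : comUnitRingType) n (A B : 'M[R]_n) :
  A \in unitmx -> B \in unitmx -> invmx (A *m B) = invmx B *m invmx A.
Proof.
move=> uA uB; have uAB : A *m B \in unitmx by rewrite unitmx_mul uA uB.
have AB_inv : A *m B *m (invmx B *m invmx A) = 1%:M.
  by rewrite mulmxA mulmxK // mulmxV.
by rewrite -[LHS]mulmx1 -AB_inv mulmxA mulVmx // mul1mx.
Qed.

Section Frobenius.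
Variable R : realType.

Lemma frob2E p q (X : 'M[R]_(p, q)) : frob2 X = \tr (X^T *m X).
Proof.
rewrite /frob2 /mxtrace exchange_big; apply: eq_bigr => j _.
by rewrite mxE; apply: eq_bigr => i _; rewrite !mxE expr2.
Qed.

Lemma frob2_mul_psd_sqrt k q (Z E : 'M[R]_k) (W : 'M[R]_(k, q)) :
  psd_sqrt Z E -> frob2 (Z *m W) = \tr (W^T *m E *m W).
Proof.
by case=> ZT [_ ZZ]; rewrite frob2E trmx_mul ZT -ZZ !mulmxA.
Qed.

End Frobenius.

Section Features.
Variables (R : realType) (d : nat).

Lemma Bmat_mulmx (w w' : warp R d) m (D D' : 'M[R]_(d, m))
    (A : 'M[R]_(fdim w', fdim w)) :
  (forall j, beta w' (col j D') = A *m beta w (col j D)) -> Bmat w' D' = A *m Bmat w D.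
Proof.
move=> hbeta; apply/matrixP => k j; rewrite !mxE hbeta mxE.
by apply: eq_bigr => r _; rewrite !mxE.
Qed.

Definition bending_energy (w : warp R d) (W : 'M[R]_(fdim w, d)) : R :=
  \tr (W^T *m Ebar w *m W).

End Features.

Section RigidMotion.
Variables (R : realType) (d : nat) (Rot : 'M[R]_d) (t : 'cV[R]_d).
Hypothesis RotO : Rot^T *m Rot = 1%:M.

Lemma vnormE (v : 'cV[R]_d) : vnorm v = Num.sqrt ((v^T *m v) 0 0).
Proof.
by rewrite /vnorm mxE; congr Num.sqrt; apply: eq_bigr => k _; rewrite !mxE expr2.
Qed.

Lemma vnorm_orthomx (v : 'cV[R]_d) : vnorm (Rot *m v) = vnorm v.
Proof. by rewrite !vnormE trmx_mul -mulmxA (mulmxA Rot^T) RotO mul1mx. Qed.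

Lemma vnorm_move_sub (p q : 'cV[R]_d) :
  vnorm ((Rot *m p + t) - (Rot *m q + t)) = vnorm (p - q).
Proof. by rewrite opprD addrACA subrr addr0 -mulmxBr vnorm_orthomx. Qed.

Lemma col_move l (C : 'M[R]_(d, l)) j :
  col j (Rot *m C + t *m const_mx 1) = Rot *m col j C + t.
Proof.
apply/matrixP => a b; rewrite !mxE big_ord1 !mxE mulr1 (ord1 b); congr (_ + _).
by apply: eq_bigr => r _; rewrite !mxE.
Qed.

Definition rigid_mx : 'M[R]_(d + 1) := block_mx Rot t 0 1%:M.

Lemma rigid_mx_unit : rigid_mx \in unitmx.
Proof.
have [_ uRot] := mulmx1_unit RotO.
by rewrite unitmxE det_ublock det1 mulr1 -unitmxE.
Qed.

Lemma rigid_mx_homog (p : 'cV[R]_d) :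
  col_mx (Rot *m p + t) 1 = rigid_mx *m col_mx p (1 : 'cV[R]_1).
Proof. by rewrite mul_block_col mulmx1 mul0mx add0r mul1mx. Qed.

Section TPSMove.
Variables (l : nat) (C : 'M[R]_(d, l)) (lam : R).
Let C' := Rot *m C + t *m const_mx 1.

Lemma tps_K_move : tps_K C' lam = tps_K C lam.
Proof.
apply/matrixP => j k; rewrite !mxE; case: eqP => // _.
by rewrite !col_move vnorm_move_sub.
Qed.

Lemma tps_Ct_move : tps_Ct C' = rigid_mx *m tps_Ct C.
Proof. by rewrite mul_block_col mul0mx add0r mul1mx. Qed.

Lemma tps_G_move : tps_G C' lam = rigid_mx *m tps_G C lam *m rigid_mx^T.
Proof. by rewrite /tps_G tps_K_move tps_Ct_move trmx_mul !mulmxA. Qed.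

Hypothesis uG : tps_G C lam \in unitmx.

Lemma invmx_tps_G_move :
  invmx (tps_G C' lam)
  = invmx rigid_mx^T *m invmx (tps_G C lam) *m invmx rigid_mx.
Proof.
have uM := rigid_mx_unit; have uMT : rigid_mx^T \in unitmx by rewrite unitmx_tr.
by rewrite tps_G_move !invmxM ?unitmx_mul ?uM ?uG // mulmxA.
Qed.

Lemma tps_Ebar_move : tps_Ebar C' lam = tps_Ebar C lam.
Proof.
rewrite /tps_Ebar invmx_tps_G_move tps_K_move tps_Ct_move trmx_mul !mulmxA.
by rewrite mulmxK ?unitmx_tr ?rigid_mx_unit // mulmxKV ?rigid_mx_unit.
Qed.

Lemma tps_phivec_move (p : 'cV[R]_d) :
  tps_phivec C' (Rot *m p + t) = tps_phivec C p.
Proof. by apply/matrixP => j z; rewrite !mxE col_move vnorm_move_sub. Qed.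

Lemma tps_beta_move (p : 'cV[R]_d) :
  tps_beta C' lam (Rot *m p + t) = tps_beta C lam p.
Proof.
rewrite /tps_beta /tps_E tps_Ebar_move tps_phivec_move rigid_mx_homog.
rewrite !tr_col_mx !mul_row_col; congr (_ + _).
rewrite invmx_tps_G_move tps_K_move tps_Ct_move !mulmxA mulmxKV ?rigid_mx_unit //.
by rewrite !trmx_mul !trmx_inv trmxK -!mulmxA mulKmx ?rigid_mx_unit.
Qed.

End TPSMove.

Definition warp_reparam (w : warp R d) :
    'M[R]_(fdim (warp_move Rot t w), d) -> 'M[R]_(fdim w, d) :=
  match w return 'M[R]_(fdim (warp_move Rot t w), d) -> 'M[R]_(fdim w, d) with
  | Affine => mulmx rigid_mx^T
  | TPS _ _ _ => id
  end.

Definition warp_reparam_inv (w : warp R d) :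
    'M[R]_(fdim w, d) -> 'M[R]_(fdim (warp_move Rot t w), d) :=
  match w return 'M[R]_(fdim w, d) -> 'M[R]_(fdim (warp_move Rot t w), d) with
  | Affine => mulmx (invmx rigid_mx^T)
  | TPS _ _ _ => id
  end.

Lemma warp_reparamK w : cancel (@warp_reparam_inv w) (@warp_reparam w).
Proof.
by case: w => [|l C lam] W //=; rewrite mulKVmx // unitmx_tr rigid_mx_unit.
Qed.

Lemma Bmat_affine_move m (D : 'M[R]_(d, m)) :
  Bmat (Affine R d) (Rot *m D + t *m const_mx 1) = rigid_mx *m Bmat (Affine R d) D.
Proof.
apply: (@Bmat_mulmx _ _ (Affine R d) (Affine R d)) => j.
by rewrite /= col_move rigid_mx_homog.
Qed.

Lemma Bmat_tps_move l (C : 'M[R]_(d, l)) lam m (D : 'M[R]_(d, m)) :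
  tps_G C lam \in unitmx ->
  Bmat (TPS (Rot *m C + t *m const_mx 1) lam) (Rot *m D + t *m const_mx 1)
  = Bmat (TPS C lam) D.
Proof.
move=> uG; apply/matrixP => k j.
by rewrite [LHS]mxE [RHS]mxE /= col_move tps_beta_move.
Qed.

Lemma Bmat_move w m (D : 'M[R]_(d, m)) W : warp_ok w ->
  (@warp_reparam w W)^T *m Bmat w D
  = W^T *m Bmat (warp_move Rot t w) (Rot *m D + t *m const_mx 1).
Proof.
case: w W => [|l C lam] W /= => [_|[_ uG]]; last by rewrite Bmat_tps_move.
by rewrite Bmat_affine_move trmx_mul trmxK mulmxA.
Qed.

Lemma bending_energy_move w W : warp_ok w ->
  bending_energy (@warp_reparam w W) = bending_energy W.
Proof.
case: w W => [|l C lam] W /= => [_|[_ uG]].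
  by rewrite /bending_energy /= !mulmx0 !mul0mx.
by rewrite /bending_energy /= tps_Ebar_move.
Qed.

End RigidMotion.

Arguments warp_reparam {R d} Rot t w.
Arguments warp_reparam_inv {R d} Rot t w.

Section Reparametrization.
Variables (R : realType) (d n m : nat) (Gam : 'I_n -> 'M[R]_m) (mu : 'I_n -> R)
  (Lam : 'M[R]_d) (nu : R).

Lemma optimal_S_reparam (w w' : 'I_n -> warp R d) (D D' : 'I_n -> 'M[R]_(d, m))
  (Z : forall i, 'M[R]_(fdim (w i))) (Z' : forall i, 'M[R]_(fdim (w' i)))
  (f : forall i, 'M[R]_(fdim (w' i), d) -> 'M[R]_(fdim (w i), d))
  (g : forall i, 'M[R]_(fdim (w i), d) -> 'M[R]_(fdim (w' i), d)) :
  (forall i, cancel (g i) (f i)) ->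
  (forall W' S,
     cost3 D' Gam mu Z' nu W' S = cost3 D Gam mu Z nu (fun i => f i (W' i)) S) ->
  forall S, optimal_S D Gam mu Z Lam nu S <-> optimal_S D' Gam mu Z' Lam nu S.
Proof.
move=> gK cost_f S.
have fgK W : (fun i => f i (g i (W i))) = W.
  by apply: functional_extensionality_dep => i; rewrite gK.
split=> -[LamS [W optW]]; split=> //.
- by exists (fun i => g i (W i)) => W' S' LamS'; rewrite !cost_f fgK; apply: optW.
- exists (fun i => f i (W i)) => W' S' LamS'.
  by rewrite -cost_f -(fgK W') -cost_f; apply: optW.
Qed.

Lemma cost3_move (w : 'I_n -> warp R d) (D : 'I_n -> 'M[R]_(d, m))
  (Z : forall i, 'M[R]_(fdim (w i))) (Rot : 'I_n -> 'M[R]_d) (t : 'I_n -> 'cV[R]_d)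
  (Z' : forall i, 'M[R]_(fdim (warp_move (Rot i) (t i) (w i)))) :
  (forall i, (Rot i)^T *m Rot i = 1%:M) -> (forall i, warp_ok (w i)) ->
  (forall i, psd_sqrt (Z i) (Ebar (w i))) ->
  (forall i, psd_sqrt (Z' i) (Ebar (warp_move (Rot i) (t i) (w i)))) ->
  forall W' S,
    cost3 (fun i => Rot i *m D i + t i *m const_mx 1) Gam mu Z' nu W' S
    = cost3 D Gam mu Z nu (fun i => warp_reparam (Rot i) (t i) (w i) (W' i)) S.
Proof.
move=> RotO ok sqrtZ sqrtZ' W' S; rewrite /cost3; congr (_ + _ + _).
  by apply: eq_bigr => i _; rewrite Bmat_move.
apply: eq_bigr => i _; rewrite (frob2_mul_psd_sqrt _ (sqrtZ i)).
rewrite (frob2_mul_psd_sqrt _ (sqrtZ' i)); congr (_ * _).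
exact/esym/bending_energy_move.
Qed.

End Reparametrization.

Theorem proposition10 (R : realType) (d n m : nat) (hd : d = 2%N \/ d = 3%N)
  (w : 'I_n -> warp R d) (D : 'I_n -> 'M[R]_(d, m)) (Gam : 'I_n -> 'M[R]_m)
  (mu : 'I_n -> R) (Z : forall i, 'M[R]_(fdim (w i)))
  (Lam : 'M[R]_d) (nu : R)
  (Rot : 'I_n -> 'M[R]_d) (t : 'I_n -> 'cV[R]_d)
  (Z' : forall i, 'M[R]_(fdim (warp_move (Rot i) (t i) (w i))))
  (hLam : is_diag_mx Lam) (hnu : 0 <= nu)
  (hGam : forall i, is_diag_mx (Gam i) /\ forall j, Gam i j j = 0 \/ Gam i j j = 1)
  (hmu : forall i, (w i = Affine R d -> mu i = 0) /\ 0 <= mu i)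
  (hok : forall i, warp_ok (w i))
  (hZ : forall i, psd_sqrt (Z i) (Ebar (w i)))
  (hZ' : forall i, psd_sqrt (Z' i) (Ebar (warp_move (Rot i) (t i) (w i))))
  (hinv : forall i,
     Bmat (w i) (D i) *m Gam i *m Gam i *m (Bmat (w i) (D i))^T
     + mu i *: ((Z i)^T *m Z i) \in unitmx)
  (hrot : forall i, is_rotation (Rot i)) :
  forall S : 'M[R]_(d, m),
    optimal_S D Gam mu Z Lam nu S <->
    optimal_S (fun i => Rot i *m D i + t i *m const_mx 1) Gam mu Z' Lam nu S.
Proof.
have RotO i : (Rot i)^T *m Rot i = 1%:M by case: (hrot i).
apply: (optimal_S_reparam Lam (fun i => warp_reparamK (t i) (RotO i) (w := w i))).
exact: cost3_move.
Qed.
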